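(* Let $F:\mathbb{R}^p\to\mathbb{R}^p$ be single-valued and $T:\mathbb{R}^p\rightrightarrows\mathbb{R}^p$ (not necessarily monotone), $\Phi:=F+T$, $\eta>0$, $\beta>0$, and assume $\mathrm{ran}\,J_{\eta T}\subseteq\mathrm{dom}\,F=\mathbb{R}^p$ and $\mathrm{dom}\,J_{\eta T}=\mathbb{R}^p$, with the resolvents single-valued. Let $\kappa_1,\kappa_2\ge0$ and let $\{(x^k,y^k)\}$ be generated by the scheme (GFBFS2): start from $x^0\in\mathrm{dom}\,\Phi$, set $x^{-1}=y^{-1}:=x^0$, and for $k\ge0$ $$y^k:=J_{\frac{\eta}{\beta}T}\big(x^k-\tfrac{\eta}{\beta}u^k\big),\qquad x^{k+1}:=\beta y^k+(1-\beta)x^k-\eta(Fy^k-u^k),$$ for some $u^k\in\mathbb{R}^p$, and set $\zeta^k:=\frac{\beta}{\eta}(x^k-y^k)-u^k\in Ty^k$. Then for any $\gamma>0$, any $x^\star\in\mathrm{zer}\,\Phi$ and any $k\ge0$, $$\begin{aligned}\|x^{k+1}-x^\star\|^2\le{}&\|x^k-x^\star\|^2-\beta\|x^k-y^k\|^2+\tfrac{\eta^2}{\gamma}\|Fy^k-u^k\|^2-(\beta-\gamma)\|x^{k+1}-y^k\|^2\\&-2\eta\langle Fy^k+\zeta^k,y^k-x^\star\rangle-(1-\beta)\|x^{k+1}-x^k\|^2.\end{aligned}$$ Moreover, assume in addition that $F$ is $L$-Lipschitz continuous, that $u^k$ satisfies $\|Fx^k-u^k\|^2\le\kappa_1\|Fx^k-Fy^{k-1}\|^2+\kappa_2\|Fx^k-Fx^{k-1}\|^2$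 for all $k\ge0$, and that there exist $x^\star\in\mathrm{zer}\,\Phi$ and $\rho\ge0$ with $\langle w,x-x^\star\rangle\ge-\rho\|w\|^2$ for all $(x,w)\in\mathrm{gra}\,\Phi$. For $r>0$ and $\gamma>0$ define $$\mathcal{P}_k:=\|x^k-x^\star\|^2+\tfrac{\kappa_1(1+r)L^2\eta^2}{r\gamma}\|x^k-y^{k-1}\|^2+\tfrac{\kappa_2(1+r)L^2\eta^2}{r\gamma}\|x^k-x^{k-1}\|^2.$$ Then for any $s>0$, $\mu\in[0,1]$ and $k\ge0$, $$\begin{aligned}\mathcal{P}_{k+1}\le{}&\mathcal{P}_k-\Big(\beta-\tfrac{(1+r)L^2\eta^2}{\gamma}-\tfrac{2\mu\rho(1+s)}{s\eta}\Big)\|y^k-x^k\|^2\\&-\Big(\beta-\gamma-\tfrac{\kappa_1(1+r)L^2\eta^2}{r\gamma}-\tfrac{2\mu\rho(1+s)}{\eta}\Big)\|x^{k+1}-y^k\|^2\\&-\Big(1-\beta-\tfrac{\kappa_2(1+r)L^2\eta^2}{r\gamma}-\tfrac{2(1-\mu)\rho}{\eta}\Big)\|x^{k+1}-x^k\|^2.\end{aligned}$$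
   Context: $\mathrm{zer}\,\Phi:=\{x:0\in Fx+Tx\}$, $\mathrm{gra}\,\Phi:=\{(x,w):w\in\Phi x\}$. $J_{\lambda T}:=(\mathbb{I}+\lambda T)^{-1}$ is the resolvent of $\lambda T$; $\mathrm{ran}$ and $\mathrm{dom}$ denote range and domain. $F$ is $L$-Lipschitz if $\|Fx-Fy\|\le L\|x-y\|$. *)

From mathcomp Require Import all_boot all_order all_algebra.
From mathcomp Require Import reals.
Set Implicit Arguments. Unset Strict Implicit. Unset Printing Implicit Defensive.
Import Order.TTheory GRing.Theory Num.Theory.
Local Open Scope ring_scope.

Section Defs.
Variables (R : realType) (p : nat).
Notation V := 'rV[R]_p.

Definition dot (u v : V) : R := \sum_(i < p) u 0 i * v 0 i.
Definition norm (u : V) : R := Num.sqrt (dot u u).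

(* set-valued operators T : R^p => R^p are relations: T x w  <->  w \in T x *)
(* resolvent J_{lam T} = (I + lam T)^{-1}:  resolvent T lam v z  <->  z \in J_{lam T} v *)
Definition resolvent (T : V -> V -> Prop) (lam : R) (v z : V) : Prop :=
  exists w, T z w /\ v = z + lam *: w.

Definition resolvent_full_dom (T : V -> V -> Prop) (lam : R) : Prop :=
  forall v, exists z, resolvent T lam v z.

Definition resolvent_single_valued (T : V -> V -> Prop) (lam : R) : Prop :=
  forall v z1 z2, resolvent T lam v z1 -> resolvent T lam v z2 -> z1 = z2.

Definition in_dom_Phi (F : V -> V) (T : V -> V -> Prop) (x : V) : Prop :=
  exists w, T x w.

Definition gra_Phi (F : V -> V) (T : V -> V -> Prop) (x w : V) : Prop :=
  exists t, T x t /\ w = F x + t.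

Definition zer_Phi (F : V -> V) (T : V -> V -> Prop) (x : V) : Prop :=
  gra_Phi F T x 0.

Definition lipschitz (L : R) (F : V -> V) : Prop :=
  forall x y, norm (F x - F y) <= L * norm (x - y).

(* s^{k-1} with the convention s^{-1} := d *)
Definition seq_prev (s : nat -> V) (d : V) (k : nat) : V :=
  match k with 0%N => d | k'.+1 => s k' end.

End Defs.

(* Put d = x^k - y^k and h = x^{k+1} - y^k.  The update gives
   eta (F y^k - u^k) = (1 - beta) d - h  and  F y^k + zeta^k = - (x^{k+1} - x^k) / eta,
   so |x^{k+1} - x*|^2 is given exactly by a polarization identity whose only
   indefinite term, 2 eta <F y^k - u^k, h>, is absorbed by Young's inequality with
   weight gamma: this is the first claim.  For the second, |F y^k - u^k|^2 is split
   through F x^k with weight r and bounded by Lipschitz continuity and the error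
   condition on u^k, whose contributions telescope into the extra terms of P_k; the
   weak Minty condition at (y^k, F y^k + zeta^k) in gra Phi bounds the inner-product
   term by (2 rho / eta) |x^{k+1} - x^k|^2, and a mu-fraction of that is split
   through y^k with weight s. *)

From mathcomp Require Import all_boot all_order all_algebra.
From mathcomp Require Import reals ring lra.
Import Order.TTheory GRing.Theory Num.Theory.
Local Open Scope ring_scope.
Set Implicit Arguments.
Unset Strict Implicit.

Section InnerProduct.
Variables (R : realType) (p : nat).
Implicit Types (u v w : 'rV[R]_p) (a : R).

Lemma dotC u v : dot u v = dot v u.
Proof. by apply: eq_bigr => i _; rewrite mulrC. Qed.

Lemma dotDl u v w : dot (u + v) w = dot u w + dot v w.
Proof. by rewrite /dot -big_split; apply: eq_bigr => i _; rewrite mxE mulrDl. Qed.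

Lemma dotZl a u v : dot (a *: u) v = a * dot u v.
Proof. by rewrite /dot mulr_sumr; apply: eq_bigr => i _; rewrite mxE mulrA. Qed.

Lemma dotNl u v : dot (- u) v = - dot u v.
Proof. by rewrite -scaleN1r dotZl mulN1r. Qed.

Lemma dotBl u v w : dot (u - v) w = dot u w - dot v w.
Proof. by rewrite dotDl dotNl. Qed.

Lemma dotDr u v w : dot u (v + w) = dot u v + dot u w.
Proof. by rewrite dotC dotDl !(dotC _ u). Qed.

Lemma dotZr a u v : dot u (a *: v) = a * dot u v.
Proof. by rewrite dotC dotZl dotC. Qed.

Lemma dotNr u v : dot u (- v) = - dot u v.
Proof. by rewrite dotC dotNl dotC. Qed.

Lemma dotBr u v w : dot u (v - w) = dot u v - dot u w.
Proof. by rewrite dotDr dotNr. Qed.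

Definition dotE := (dotDl, dotDr, dotBl, dotBr, dotNl, dotNr, dotZl, dotZr).

Lemma dot_ge0 u : 0 <= dot u u.
Proof. by apply: sumr_ge0 => i _; rewrite -expr2 sqr_ge0. Qed.

Lemma norm_ge0 u : 0 <= norm u.
Proof. exact: sqrtr_ge0. Qed.

Lemma sqr_norm u : norm u ^+ 2 = dot u u.
Proof. by rewrite sqr_sqrtr // dot_ge0. Qed.

Lemma sqr_normZ a u : norm (a *: u) ^+ 2 = a ^+ 2 * norm u ^+ 2.
Proof. by rewrite !sqr_norm dotZl dotZr mulrA expr2. Qed.

Lemma sqr_normD u v : norm (u + v) ^+ 2 = norm u ^+ 2 + 2 * dot u v + norm v ^+ 2.
Proof. by rewrite !sqr_norm !dotE (dotC v u); ring. Qed.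

Lemma norm_opp u : norm (- u) = norm u.
Proof. by rewrite /norm dotNl dotNr opprK. Qed.

Lemma norm_distC u v : norm (u - v) = norm (v - u).
Proof. by rewrite -opprB norm_opp. Qed.

(* Young's inequality, from [0 <= |g u - v|^2 / g]. *)
Lemma dot_le_young (g : R) u v : 0 < g ->
  2 * dot u v <= g * norm u ^+ 2 + g^-1 * norm v ^+ 2.
Proof.
move=> g_gt0; rewrite -subr_ge0.
have -> : g * norm u ^+ 2 + g^-1 * norm v ^+ 2 - 2 * dot u v
          = g^-1 * norm (g *: u - v) ^+ 2.
  by rewrite !sqr_norm !dotE (dotC v u); field; rewrite gt_eqF.
by rewrite mulr_ge0 ?sqr_ge0 // invr_ge0 ltW.
Qed.

Lemma sqr_normD_le (r : R) u v : 0 < r ->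
  norm (u + v) ^+ 2 <= (1 + r) * norm u ^+ 2 + (1 + r) / r * norm v ^+ 2.
Proof.
move=> r_gt0; rewrite sqr_normD.
have := dot_le_young u v r_gt0.
have -> : (1 + r) / r = 1 + r^-1 by field; rewrite gt_eqF.
lra.
Qed.

Lemma sqr_distD_le (s : R) u v w : 0 < s ->
  norm (u - w) ^+ 2 <= (1 + s) * norm (u - v) ^+ 2 + (1 + s) / s * norm (v - w) ^+ 2.
Proof. by move=> s_gt0; rewrite -(subrKA v u (- w)); exact: sqr_normD_le. Qed.

End InnerProduct.

Lemma lipschitz_sqr (R : realType) (p : nat) (L : R) (F : 'rV[R]_p -> 'rV[R]_p)
    (x y : 'rV[R]_p) :
  lipschitz L F -> norm (F x - F y) ^+ 2 <= L ^+ 2 * norm (x - y) ^+ 2.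
Proof.
move=> F_lip; rewrite -exprMn; apply: lerXn2r; rewrite ?nnegrE ?norm_ge0 //.
exact: le_trans (norm_ge0 _) (F_lip x y).
Qed.

Lemma resolvent_graph (R : realType) (p : nat) (T : 'rV[R]_p -> 'rV[R]_p -> Prop)
    (lam : R) v z :
  lam != 0 -> resolvent T lam v z -> T z (lam^-1 *: (v - z)).
Proof.
by move=> lam_neq0 [w [Tzw ->]]; rewrite addrC addKr scalerA mulVf ?scale1r.
Qed.

Lemma sqr_norm_residual_le (R : realType) (p : nat) (F : 'rV[R]_p -> 'rV[R]_p)
    (L r kappa1 kappa2 : R) (x y u xp yp : 'rV[R]_p) :
  lipschitz L F -> 0 < r -> 0 <= kappa1 -> 0 <= kappa2 ->
  norm (F x - u) ^+ 2 <= kappa1 * norm (F x - F yp) ^+ 2 + kappa2 * norm (F x - F xp) ^+ 2 ->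
  norm (F y - u) ^+ 2 <= (1 + r) * L ^+ 2 * norm (y - x) ^+ 2
    + (1 + r) / r * (kappa1 * L ^+ 2 * norm (x - yp) ^+ 2 + kappa2 * L ^+ 2 * norm (x - xp) ^+ 2).
Proof.
move=> F_lip r_gt0 kappa1_ge0 kappa2_ge0 u_err.
have r1_ge0 : 0 <= 1 + r by rewrite addr_ge0 // ltW.
rewrite -(subrKA (F x) (F y) (- u)); apply: le_trans (sqr_normD_le _ _ r_gt0) _.
apply: lerD; first by rewrite -mulrA ler_wpM2l // lipschitz_sqr.
apply: ler_wpM2l; first by rewrite divr_ge0 // ltW.
apply: le_trans u_err _.
by apply: lerD; rewrite -mulrA ler_wpM2l // lipschitz_sqr.
Qed.

Section GFBFSStep.
Variables (R : realType) (p : nat) (F : 'rV[R]_p -> 'rV[R]_p) (eta beta : R).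
Variables (x0 x1 y u xs : 'rV[R]_p).
Hypothesis eta_gt0 : 0 < eta.
Hypothesis x1_def : x1 = beta *: y + (1 - beta) *: x0 - eta *: (F y - u).

Local Notation zeta := ((beta / eta) *: (x0 - y) - u).

Let eta_neq0 : eta != 0. Proof. by rewrite gt_eqF. Qed.

Lemma gfbfs_residual : eta *: (F y - u) = (1 - beta) *: (x0 - y) - (x1 - y).
Proof. by rewrite x1_def; apply/rowP => i; rewrite !mxE; ring. Qed.

Lemma gfbfs_F_add_zeta : F y + zeta = - eta^-1 *: (x1 - x0).
Proof. by rewrite x1_def; apply/rowP => i; rewrite !mxE; field. Qed.

Lemma gfbfs_sqr_dist_eq :
  norm (x1 - xs) ^+ 2 =
    norm (x0 - xs) ^+ 2 - beta * norm (x0 - y) ^+ 2 - beta * norm (x1 - y) ^+ 2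
    - 2 * eta * dot (F y + zeta) (y - xs) - (1 - beta) * norm (x1 - x0) ^+ 2
    - 2 * dot (eta *: (F y - u)) (x1 - y).
Proof.
rewrite gfbfs_F_add_zeta gfbfs_residual.
rewrite -(subrKA y x1 (- xs)) -(subrKA y x0 (- xs)) -(subrKA y x1 (- x0)) -[y - x0]opprB.
move: (x0 - y) (x1 - y) (y - xs) => d h a.
rewrite !sqr_norm !dotE (dotC a d) (dotC a h) (dotC h d).
by field.
Qed.

Lemma gfbfs_sqr_dist_le (gamma : R) : 0 < gamma ->
  norm (x1 - xs) ^+ 2 <=
    norm (x0 - xs) ^+ 2 - beta * norm (x0 - y) ^+ 2
    + eta ^+ 2 / gamma * norm (F y - u) ^+ 2
    - (beta - gamma) * norm (x1 - y) ^+ 2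
    - 2 * eta * dot (F y + zeta) (y - xs)
    - (1 - beta) * norm (x1 - x0) ^+ 2.
Proof.
move=> gamma_gt0; have invgamma_gt0 : 0 < gamma^-1 by rewrite invr_gt0.
have young := dot_le_young (- (eta *: (F y - u))) (x1 - y) invgamma_gt0.
rewrite dotNl invrK norm_opp sqr_normZ in young.
rewrite gfbfs_sqr_dist_eq; lra.
Qed.

Lemma gfbfs_minty_bound (rho : R) :
  - rho * norm (F y + zeta) ^+ 2 <= dot (F y + zeta) (y - xs) ->
  - (2 * eta * dot (F y + zeta) (y - xs)) <= 2 * rho / eta * norm (x1 - x0) ^+ 2.
Proof.
rewrite gfbfs_F_add_zeta sqr_normZ sqrrN => minty.
have two_eta_ge0 : 0 <= 2 * eta by rewrite mulr_ge0 // ltW.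
have := ler_wpM2l two_eta_ge0 minty.
have -> : 2 * eta * (- rho * (eta^-1 ^+ 2 * norm (x1 - x0) ^+ 2))
          = - (2 * rho / eta * norm (x1 - x0) ^+ 2) by field.
by move=> ?; lra.
Qed.

Lemma gfbfs_lyapunov_le (L rho r gamma s mu kappa1 kappa2 : R) (xp yp : 'rV[R]_p) :
  lipschitz L F -> 0 <= kappa1 -> 0 <= kappa2 -> 0 <= rho ->
  0 < r -> 0 < gamma -> 0 < s -> 0 <= mu ->
  norm (F x0 - u) ^+ 2 <= kappa1 * norm (F x0 - F yp) ^+ 2 + kappa2 * norm (F x0 - F xp) ^+ 2 ->
  - rho * norm (F y + zeta) ^+ 2 <= dot (F y + zeta) (y - xs) ->
  norm (x1 - xs) ^+ 2
    + kappa1 * (1 + r) * L ^+ 2 * eta ^+ 2 / (r * gamma) * norm (x1 - y) ^+ 2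
    + kappa2 * (1 + r) * L ^+ 2 * eta ^+ 2 / (r * gamma) * norm (x1 - x0) ^+ 2
  <= norm (x0 - xs) ^+ 2
    + kappa1 * (1 + r) * L ^+ 2 * eta ^+ 2 / (r * gamma) * norm (x0 - yp) ^+ 2
    + kappa2 * (1 + r) * L ^+ 2 * eta ^+ 2 / (r * gamma) * norm (x0 - xp) ^+ 2
    - (beta - (1 + r) * L ^+ 2 * eta ^+ 2 / gamma - 2 * mu * rho * (1 + s) / (s * eta))
        * norm (y - x0) ^+ 2
    - (beta - gamma - kappa1 * (1 + r) * L ^+ 2 * eta ^+ 2 / (r * gamma)
        - 2 * mu * rho * (1 + s) / eta) * norm (x1 - y) ^+ 2
    - (1 - beta - kappa2 * (1 + r) * L ^+ 2 * eta ^+ 2 / (r * gamma)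
        - 2 * (1 - mu) * rho / eta) * norm (x1 - x0) ^+ 2.
Proof.
move=> F_lip kappa1_ge0 kappa2_ge0 rho_ge0 r_gt0 gamma_gt0 s_gt0 mu_ge0 u_err minty.
have dist := gfbfs_sqr_dist_le gamma_gt0; rewrite (norm_distC x0 y) in dist.
have {}minty := gfbfs_minty_bound minty.
have eta2_gamma_ge0 : 0 <= eta ^+ 2 / gamma by rewrite divr_ge0 ?sqr_ge0 // ltW.
have resid := ler_wpM2l eta2_gamma_ge0
  (sqr_norm_residual_le y F_lip r_gt0 kappa1_ge0 kappa2_ge0 u_err).
have mu_rho_ge0 : 0 <= 2 * mu * rho / eta by rewrite divr_ge0 ?mulr_ge0 // ltW.
have incr := ler_wpM2l mu_rho_ge0 (sqr_distD_le x1 y x0 s_gt0).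
lra.
Qed.

End GFBFSStep.

Theorem lemma6 (R : realType) (p : nat)
  (F : 'rV[R]_p -> 'rV[R]_p) (T : 'rV[R]_p -> 'rV[R]_p -> Prop)
  (eta beta kappa1 kappa2 : R)
  (x y u : nat -> 'rV[R]_p) :
  0 < eta -> 0 < beta ->
  resolvent_full_dom T eta ->
  resolvent_single_valued T eta ->
  resolvent_single_valued T (eta / beta) ->
  0 <= kappa1 -> 0 <= kappa2 ->
  in_dom_Phi F T (x 0%N) ->
  (* scheme (GFBFS2) *)
  (forall k, resolvent T (eta / beta) (x k - (eta / beta) *: u k) (y k)) ->
  (forall k, x k.+1 = beta *: y k + (1 - beta) *: x k - eta *: (F (y k) - u k)) ->
  (* first claim *)
  (forall (gamma : R) (xs : 'rV[R]_p) (k : nat), 0 < gamma -> zer_Phi F T xs ->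
     let zeta := (beta / eta) *: (x k - y k) - u k in
     norm (x k.+1 - xs) ^+ 2 <=
       norm (x k - xs) ^+ 2 - beta * norm (x k - y k) ^+ 2
       + eta ^+ 2 / gamma * norm (F (y k) - u k) ^+ 2
       - (beta - gamma) * norm (x k.+1 - y k) ^+ 2
       - 2 * eta * dot (F (y k) + zeta) (y k - xs)
       - (1 - beta) * norm (x k.+1 - x k) ^+ 2)
  /\
  (* second claim *)
  (forall L : R, lipschitz L F ->
   (forall k, norm (F (x k) - u k) ^+ 2 <=
        kappa1 * norm (F (x k) - F (seq_prev y (x 0%N) k)) ^+ 2
      + kappa2 * norm (F (x k) - F (seq_prev x (x 0%N) k)) ^+ 2) ->
   forall (xs : 'rV[R]_p) (rho : R), zer_Phi F T xs -> 0 <= rho ->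
   (forall xx w, gra_Phi F T xx w -> dot w (xx - xs) >= - rho * norm w ^+ 2) ->
   forall (r gamma : R), 0 < r -> 0 < gamma ->
   let P := fun k : nat =>
     norm (x k - xs) ^+ 2
     + kappa1 * (1 + r) * L ^+ 2 * eta ^+ 2 / (r * gamma) * norm (x k - seq_prev y (x 0%N) k) ^+ 2
     + kappa2 * (1 + r) * L ^+ 2 * eta ^+ 2 / (r * gamma) * norm (x k - seq_prev x (x 0%N) k) ^+ 2 in
   forall (s mu : R) (k : nat), 0 < s -> 0 <= mu <= 1 ->
     P k.+1 <= P k
       - (beta - (1 + r) * L ^+ 2 * eta ^+ 2 / gamma - 2 * mu * rho * (1 + s) / (s * eta))
           * norm (y k - x k) ^+ 2
       - (beta - gamma - kappa1 * (1 + r) * L ^+ 2 * eta ^+ 2 / (r * gamma)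
           - 2 * mu * rho * (1 + s) / eta) * norm (x k.+1 - y k) ^+ 2
       - (1 - beta - kappa2 * (1 + r) * L ^+ 2 * eta ^+ 2 / (r * gamma)
           - 2 * (1 - mu) * rho / eta) * norm (x k.+1 - x k) ^+ 2).
Proof.
(* Neither claim needs x* in zer Phi, x^0 in dom Phi, or the assumptions on the
   resolvents beyond the defining relation of y^k. *)
move=> eta_gt0 beta_gt0 _ _ _ kappa1_ge0 kappa2_ge0 _ y_res x_step.
have zeta_T k : T (y k) ((beta / eta) *: (x k - y k) - u k).
  have [eta_neq0 beta_neq0] : eta != 0 /\ beta != 0 by rewrite !gt_eqF.
  have lam_neq0 : eta / beta != 0 by rewrite mulf_neq0 ?invr_eq0.
  suff <- : (eta / beta)^-1 *: (x k - (eta / beta) *: u k - y k)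
            = (beta / eta) *: (x k - y k) - u k by exact: resolvent_graph (y_res k).
  by apply/rowP => i; rewrite !mxE; field; apply/andP.
split=> [gamma xs k gamma_gt0 _ /= | L F_lip u_err xs rho _ rho_ge0 minty r gamma r_gt0 gamma_gt0
         P s mu k s_gt0 mu_01].
  exact: gfbfs_sqr_dist_le.
apply: (gfbfs_lyapunov_le eta_gt0 (x_step k) F_lip) (u_err k) _ => //.
  by case/andP: mu_01.
by apply: minty; exists ((beta / eta) *: (x k - y k) - u k); split; first exact: zeta_T.
Qed.
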